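(* Let $\lambda=(\lambda_k)_{k\in\mathbb N}\in\ell^\infty(\mathbb N)$ and define $T_\lambda:\ell^\infty(\mathbb N)\to\ell^\infty(\mathbb N)$ by $T_\lambda(x_1,x_2,\ldots)=(\lambda_1x_1,\lambda_2x_2,\ldots)$. The following are equivalent: (i) $T_\lambda$ is recurrent; (ii) $T_\lambda$ is rigid; (iii) $T_\lambda$ is uniformly rigid; (iv) there is a sequence $(\theta_k)_{k\in\mathbb N}\subset\mathbb R$ with $\lambda_k=e^{2\pi i\theta_k}$ for every $k$, and $\liminf_{n\to\infty}\sup_{k\in\mathbb N}|e^{2\pi i n\theta_k}-1|=0$.
   Context: An operator $T$ on a Banach space $X$ is recurrent if for every non-empty open $U\subset X$ there is a positive integer $k$ with $U\cap T^{-k}(U)\neq\emptyset$; rigid if there is an increasing sequence of positive integers $(k_n)$ with $T^{k_n}x\to x$ for all $x\in X$; uniformly rigid if there is an increasing sequence of positive integers $(k_n)$ with $\|T^{k_n}-I\|\to0$. *)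

From Stdlib Require Import Reals.
From Coquelicot Require Import Coquelicot.
Open Scope R_scope.

(* Complex-valued sequences; l^oo(N) = the linf_bounded ones. *)
Definition seqC := nat -> C.

Definition linf_bounded (x : seqC) : Prop := exists M : R, forall k, Cmod (x k) <= M.

Definition linf_norm (x : seqC) : R := real (Sup_seq (fun k => Finite (Cmod (x k)))).

Definition seq_sub (x y : seqC) : seqC := fun k => Cminus (x k) (y k).

Definition linf_open (U : seqC -> Prop) : Prop :=
  (forall x, U x -> linf_bounded x) /\
  (forall x, U x -> exists eps : R, 0 < eps /\
      forall y, linf_bounded y -> linf_norm (seq_sub y x) < eps -> U y).

Definition op_norm (A : seqC -> seqC) : R :=
  real (Lub_Rbar (fun r => exists x, linf_bounded x /\ linf_norm x <= 1 /\ r = linf_norm (A x))).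

Definition T_diag (lam : seqC) (x : seqC) : seqC := fun k => Cmult (lam k) (x k).

Definition iterT (T : seqC -> seqC) (n : nat) (x : seqC) : seqC := Nat.iter n T x.

Definition recurrent (T : seqC -> seqC) : Prop :=
  forall U : seqC -> Prop, linf_open U -> (exists x, U x) ->
    exists k : nat, (0 < k)%nat /\ exists x, U x /\ U (iterT T k x).

Definition increasing_pos (kn : nat -> nat) : Prop :=
  (0 < kn 0)%nat /\ forall n, (kn n < kn (S n))%nat.

Definition rigid (T : seqC -> seqC) : Prop :=
  exists kn : nat -> nat, increasing_pos kn /\
    forall x, linf_bounded x ->
      is_lim_seq (fun n => linf_norm (seq_sub (iterT T (kn n) x) x)) 0.

Definition uniformly_rigid (T : seqC -> seqC) : Prop :=
  exists kn : nat -> nat, increasing_pos kn /\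
    is_lim_seq (fun n => op_norm (fun x => seq_sub (iterT T (kn n) x) x)) 0.

Definition cis (t : R) : C := (cos t, sin t).

From Stdlib Require Import Reals Lra Lia Psatz ClassicalEpsilon.
From Coquelicot Require Import Coquelicot.
Open Scope R_scope.

(** The iterate [T_lam^n] multiplies the [k]-th coordinate by [lam_k^n], so
    [T_lam^n - I] has operator norm [sup_k |lam_k^n - 1|]: everything reduces to
    "return times", i.e. [n >= 1] with [sup_k |lam_k^n - 1| <= e], existing for
    every [e > 0].  Recurrence applied to a small ball around [(1,1,...)]
    produces them.  Return times force [|lam_k| = 1]; on the unit circle an
    [e]-return time [n] makes [m n] an [m e]-return time, so they can be taken
    arbitrarily large, and one increasing sequence of [1/(n+1)]-return times
    witnesses uniform rigidity, hence rigidity, hence recurrence.  Condition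
    (iv) is the same property with [lam_k = e^(2 pi i theta_k)]. *)

Lemma linf_norm_spec (x : seqC) (M : R) : (forall k, Cmod (x k) <= M) ->
  (forall k, Cmod (x k) <= linf_norm x) /\ linf_norm x <= M.
Proof.
  intros HM. unfold linf_norm.
  assert (Hge : forall k, Rbar_le (Cmod (x k)) (Sup_seq (fun k => Finite (Cmod (x k))))).
  { intro k. apply Sup_seq_minor_le with k. apply Rle_refl. }
  assert (Hle : Rbar_le (Sup_seq (fun k => Finite (Cmod (x k)))) M).
  { apply Rbar_not_lt_le. intros [n Hn]%Sup_seq_minor_lt. specialize (HM n). simpl in Hn. lra. }
  destruct (Sup_seq _) as [s| |]; simpl in *.
  - auto.
  - contradiction.
  - contradiction (Hge O).
Qed.

Lemma linf_norm_ge (x : seqC) k : linf_bounded x -> Cmod (x k) <= linf_norm x.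
Proof. intros [M HM]. apply (linf_norm_spec x M HM). Qed.

Lemma linf_norm_le (x : seqC) M : (forall k, Cmod (x k) <= M) -> linf_norm x <= M.
Proof. intros HM. apply (linf_norm_spec x M HM). Qed.

Lemma linf_norm_ge0 (x : seqC) : linf_bounded x -> 0 <= linf_norm x.
Proof. intros Hx. apply Rle_trans with (Cmod (x O)). apply Cmod_ge_0. now apply linf_norm_ge. Qed.

Lemma linf_norm_zero (x : seqC) : (forall k, x k = 0%C) -> linf_norm x = 0.
Proof.
  intros H0. apply Rle_antisym.
  - apply linf_norm_le. intro k. rewrite H0, Cmod_0. lra.
  - apply linf_norm_ge0. exists 0. intro k. rewrite H0, Cmod_0. lra.
Qed.

Lemma Cmod_minus_le (a b : C) : Cmod (a - b)%C <= Cmod a + Cmod b.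
Proof. unfold Cminus. rewrite <- (Cmod_opp b). apply Cmod_triangle. Qed.

Lemma Cmod_minus_triangle (a b c : C) : Cmod (a - c)%C <= Cmod (a - b)%C + Cmod (b - c)%C.
Proof. replace (a - c)%C with ((a - b) + (b - c))%C by ring. apply Cmod_triangle. Qed.

Lemma Cmod_minus_sym (a b : C) : Cmod (a - b)%C = Cmod (b - a)%C.
Proof. replace (a - b)%C with (- (b - a))%C by ring. apply Cmod_opp. Qed.

Lemma Cmod_minus_ge (a b : C) : Cmod a - Cmod b <= Cmod (a - b)%C.
Proof.
  pose proof (Cmod_triangle (a - b) b) as H.
  replace (a - b + b)%C with a in H by ring. lra.
Qed.

Lemma linf_bounded_sub (x y : seqC) :
  linf_bounded x -> linf_bounded y -> linf_bounded (seq_sub x y).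
Proof.
  intros [Mx Hx] [My Hy]. exists (Mx + My). intro k.
  apply Rle_trans with (Cmod (x k) + Cmod (y k)); [apply Cmod_minus_le|].
  now apply Rplus_le_compat.
Qed.

Lemma linf_norm_sub_triangle (x y z : seqC) :
  linf_bounded x -> linf_bounded y -> linf_bounded z ->
  linf_norm (seq_sub x z) <= linf_norm (seq_sub x y) + linf_norm (seq_sub y z).
Proof.
  intros Hx Hy Hz. apply linf_norm_le. intro k.
  apply Rle_trans with (Cmod (x k - y k)%C + Cmod (y k - z k)%C); [apply Cmod_minus_triangle|].
  apply Rplus_le_compat; apply (linf_norm_ge (seq_sub _ _)); now apply linf_bounded_sub.
Qed.

Lemma linf_ball_open (x0 : seqC) (r : R) : linf_bounded x0 ->
  linf_open (fun y => linf_bounded y /\ linf_norm (seq_sub y x0) < r).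
Proof.
  intros Hx0. split; [now intros y []|].
  intros x [Hx Hxr]. exists (r - linf_norm (seq_sub x x0)). split; [lra|].
  intros y Hy Hyx. split; [exact Hy|].
  pose proof (linf_norm_sub_triangle y x x0 Hy Hx Hx0). lra.
Qed.

Definition ones : seqC := fun _ => 1%C.

Lemma linf_bounded_ones : linf_bounded ones.
Proof. exists 1. intro k. unfold ones. rewrite Cmod_1. lra. Qed.

Lemma linf_norm_ones_le : linf_norm ones <= 1.
Proof. apply linf_norm_le. intro k. unfold ones. rewrite Cmod_1. lra. Qed.

(* [op_norm] is a [Lub_Rbar]; once a finite upper bound [d] is known it is a real. *)
Lemma op_norm_bounds (A : seqC -> seqC) (d : R) (x : seqC) :
  (forall y, linf_bounded y -> linf_norm y <= 1 -> linf_norm (A y) <= d) ->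
  linf_bounded x -> linf_norm x <= 1 ->
  linf_norm (A x) <= op_norm A <= d.
Proof.
  intros Hd Hx Hx1. unfold op_norm.
  set (E := fun r => exists y, linf_bounded y /\ linf_norm y <= 1 /\ r = linf_norm (A y)).
  destruct (Lub_Rbar_correct E) as [Hub Hleast].
  assert (Hle : Rbar_le (Lub_Rbar E) d).
  { apply Hleast. intros r (y & Hy & Hy1 & ->). now apply Hd. }
  assert (Hge : Rbar_le (linf_norm (A x)) (Lub_Rbar E)) by (apply Hub; now exists x).
  destruct (Lub_Rbar E); simpl in *; [lra | contradiction | contradiction].
Qed.

Lemma cis_add (s t : R) : cis (s + t) = (cis s * cis t)%C.
Proof. unfold cis, Cmult; simpl. rewrite cos_plus, sin_plus. f_equal; ring. Qed.

Lemma cis_INR_mult (n : nat) (t : R) : cis (INR n * t) = (cis t ^ n)%C.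
Proof.
  induction n as [|n IH]; simpl Cpow.
  - unfold cis. rewrite Rmult_0_l, cos_0, sin_0. reflexivity.
  - rewrite S_INR, <- IH, <- cis_add. f_equal. ring.
Qed.

Lemma Cmod_cis (t : R) : Cmod (cis t) = 1.
Proof.
  unfold Cmod, cis; simpl.
  replace (cos t * (cos t * 1) + sin t * (sin t * 1)) with 1; [apply sqrt_1|].
  pose proof (sin2_cos2 t). unfold Rsqr in *. lra.
Qed.

Lemma cis_of_Cmod_1 (z : C) : Cmod z = 1 -> exists t, z = cis t.
Proof.
  destruct z as [a b]. unfold Cmod; simpl. intro H.
  assert (Hs : a * (a * 1) + b * (b * 1) = 1).
  { assert (H0 : 0 <= a * (a * 1) + b * (b * 1)) by nra.
    pose proof (sqrt_sqrt _ H0) as H1. rewrite H in H1. lra. }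
  assert (Ha : -1 <= a <= 1) by nra.
  destruct (Rle_or_lt 0 b) as [Hb|Hb].
  - exists (acos a). unfold cis. rewrite cos_acos, sin_acos by auto. f_equal.
    symmetry. apply sqrt_lem_1; unfold Rsqr; nra.
  - exists (- acos a). unfold cis. rewrite cos_neg, sin_neg, cos_acos, sin_acos by auto.
    f_equal. enough (sqrt (1 - a²) = - b) by lra.
    apply sqrt_lem_1; unfold Rsqr; nra.
Qed.

Lemma is_lim_seq_inv_succ : is_lim_seq (fun n => / (INR n + 1)) 0.
Proof.
  apply is_lim_seq_ext with (fun n => / INR (S n)); [intro n; now rewrite S_INR|].
  apply (is_lim_seq_incr_1 (fun n => / INR n)).
  apply (is_lim_seq_inv INR p_infty is_lim_seq_INR). discriminate.
Qed.

Lemma increasing_pos_ge (kn : nat -> nat) : increasing_pos kn -> forall n, (S n <= kn n)%nat.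
Proof. intros [H0 HS] n. induction n; [lia|]. specialize (HS n). lia. Qed.

Lemma Rabs_pow_sub1_ge (r : R) (k : nat) : 0 <= r -> (0 < k)%nat ->
  Rabs (r - 1) <= Rabs (r ^ k - 1).
Proof.
  intros Hr Hk. destruct k as [|k]; [lia|].
  destruct (Rle_or_lt 1 r) as [H1|H1].
  - assert (r ^ 1 <= r ^ S k) by (apply Rle_pow; auto; lia). rewrite pow_1 in *.
    rewrite !Rabs_pos_eq; lra.
  - assert (r ^ k <= 1 ^ k) by (apply pow_incr; lra). rewrite pow1 in *.
    assert (0 <= r ^ k) by (apply pow_le; lra).
    simpl. rewrite !Rabs_left1; nra.
Qed.

Lemma iterT_T_diag (lam x : seqC) (n k : nat) :
  iterT (T_diag lam) n x k = (lam k ^ n * x k)%C.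
Proof.
  induction n as [|n IH]; unfold iterT in *; simpl; [ring|].
  unfold T_diag at 1. rewrite IH. ring.
Qed.

Lemma iterT_T_diag_sub (lam x : seqC) (n k : nat) :
  seq_sub (iterT (T_diag lam) n x) x k = ((lam k ^ n - 1) * x k)%C.
Proof. unfold seq_sub. rewrite iterT_T_diag. ring. Qed.

Lemma linf_bounded_iterT (lam x : seqC) (n : nat) :
  linf_bounded lam -> linf_bounded x -> linf_bounded (iterT (T_diag lam) n x).
Proof.
  intros [Ma Ha] [Mx Hx]. exists (Ma ^ n * Mx). intro k.
  rewrite iterT_T_diag, Cmod_mult, Cmod_pow.
  apply Rmult_le_compat; auto using pow_le, Cmod_ge_0.
  apply pow_incr. split; auto using Cmod_ge_0.
Qed.

Section ReturnTimes.

Variable lam : seqC.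

Definition return_time (e : R) (k : nat) : Prop := forall j, Cmod (lam j ^ k - 1)%C <= e.

Definition has_return_times : Prop :=
  forall e, 0 < e -> exists k, (0 < k)%nat /\ return_time e k.

Lemma linf_norm_iterT_sub_le (e : R) (k : nat) (x : seqC) :
  return_time e k -> linf_bounded x ->
  linf_norm (seq_sub (iterT (T_diag lam) k x) x) <= e * linf_norm x.
Proof.
  intros He Hx. apply linf_norm_le. intro j.
  rewrite iterT_T_diag_sub, Cmod_mult.
  apply Rmult_le_compat; auto using Cmod_ge_0, linf_norm_ge.
Qed.

Lemma has_return_times_Cmod : has_return_times -> forall j, Cmod (lam j) = 1.
Proof.
  intros Hret j. destruct (Req_dec (Cmod (lam j)) 1) as [|Hne]; [assumption|exfalso].
  set (r := Cmod (lam j)) in *.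
  assert (Hd : 0 < Rabs (r - 1)) by (apply Rabs_pos_lt; lra).
  destruct (Hret (Rabs (r - 1) / 2)) as [k [Hk Hj]]; [lra|].
  specialize (Hj j).
  assert (Rabs (r ^ k - 1) <= Cmod (lam j ^ k - 1)%C).
  { unfold r. rewrite <- Cmod_pow. apply Rabs_le. split.
    - pose proof (Cmod_minus_ge 1 (lam j ^ k)) as H.
      rewrite Cmod_1, Cmod_minus_sym in H. lra.
    - pose proof (Cmod_minus_ge (lam j ^ k) 1) as H. rewrite Cmod_1 in H. lra. }
  pose proof (Rabs_pow_sub1_ge r k (Cmod_ge_0 _) Hk). lra.
Qed.

(* [lam^(k+l) - 1 = lam^k (lam^l - 1) + (lam^k - 1)], and [|lam^k| <= 1]. *)
Lemma return_time_add (e1 e2 : R) (k l : nat) : (forall j, Cmod (lam j) <= 1) ->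
  return_time e1 k -> return_time e2 l -> return_time (e1 + e2) (k + l).
Proof.
  intros Hle1 Hk Hl j. rewrite Cpow_add_r.
  replace (lam j ^ k * lam j ^ l - 1)%C
    with (lam j ^ k * (lam j ^ l - 1) + (lam j ^ k - 1))%C by ring.
  eapply Rle_trans; [apply Cmod_triangle|]. rewrite Cmod_mult, Cmod_pow.
  assert (0 <= Cmod (lam j) ^ k <= 1).
  { split; [apply pow_le, Cmod_ge_0|]. rewrite <- (pow1 k).
    apply pow_incr. split; auto using Cmod_ge_0. }
  specialize (Hk j). specialize (Hl j).
  pose proof (Cmod_ge_0 (lam j ^ l - 1)%C). nra.
Qed.

Lemma return_time_mult (e : R) (k m : nat) : (forall j, Cmod (lam j) <= 1) ->
  return_time e k -> return_time (INR (S m) * e) (S m * k).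
Proof.
  intros Hle1 Hk. induction m as [|m IH].
  - simpl. rewrite Nat.add_0_r, Rmult_1_l. exact Hk.
  - replace (INR (S (S m)) * e) with (e + INR (S m) * e) by (rewrite (S_INR (S m)); ring).
    replace (S (S m) * k)%nat with (k + S m * k)%nat by lia.
    now apply return_time_add.
Qed.

Lemma has_return_times_unbounded : has_return_times ->
  forall e, 0 < e -> forall N, exists k, (N < k)%nat /\ return_time e k.
Proof.
  intros Hret e He N.
  assert (Hle1 : forall j, Cmod (lam j) <= 1)
    by (intro j; rewrite (has_return_times_Cmod Hret); lra).
  assert (HN : 0 < INR (S N)) by (apply lt_0_INR; lia).
  destruct (Hret (e / INR (S N))) as [k [Hk HkN]]; [now apply Rdiv_lt_0_compat|].
  exists (S N * k)%nat. split; [nia|].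
  replace e with (INR (S N) * (e / INR (S N))) by (field; lra).
  now apply return_time_mult.
Qed.

Lemma return_time_sequence : has_return_times ->
  exists kn, increasing_pos kn /\ forall n, return_time (/ (INR n + 1)) (kn n).
Proof.
  intros Hret.
  assert (Hnext : forall n N, {k | (N < k)%nat /\ return_time (/ (INR n + 1)) k}).
  { intros n N. apply constructive_indefinite_description.
    apply has_return_times_unbounded; [exact Hret|].
    apply Rinv_0_lt_compat. pose proof (pos_INR n). lra. }
  set (next n N := proj1_sig (Hnext n N)).
  assert (Hspec : forall n N, (N < next n N)%nat /\ return_time (/ (INR n + 1)) (next n N))
    by (intros n N; exact (proj2_sig (Hnext n N))).
  exists (fix kn n := match n with O => next O O | S m => next (S m) (kn m) end).
  split; [split|].
  - apply Hspec.
  - intro n. apply Hspec.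
  - intros [|n]; apply Hspec.
Qed.

Hypothesis hlam : linf_bounded lam.

Lemma return_time_le_op_norm (k j : nat) :
  Cmod (lam j ^ k - 1)%C <= op_norm (fun x => seq_sub (iterT (T_diag lam) k x) x).
Proof.
  destruct hlam as [Ma Ha].
  assert (Hbound : forall y, linf_bounded y -> linf_norm y <= 1 ->
    linf_norm (seq_sub (iterT (T_diag lam) k y) y) <= Ma ^ k + 1).
  { intros y Hy Hy1. apply linf_norm_le. intro i.
    rewrite iterT_T_diag_sub, Cmod_mult.
    assert (Cmod (lam i ^ k - 1)%C <= Ma ^ k + 1).
    { eapply Rle_trans; [apply Cmod_minus_le|]. rewrite Cmod_pow, Cmod_1.
      apply Rplus_le_compat_r, pow_incr. auto using Cmod_ge_0. }
    pose proof (linf_norm_ge y i Hy). pose proof (Cmod_ge_0 (y i)).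
    pose proof (Cmod_ge_0 (lam i ^ k - 1)%C). nra. }
  pose proof (op_norm_bounds _ _ ones Hbound linf_bounded_ones linf_norm_ones_le) as [Hge _].
  eapply Rle_trans; [|exact Hge].
  replace (lam j ^ k - 1)%C with (seq_sub (iterT (T_diag lam) k ones) ones j)
    by (rewrite iterT_T_diag_sub; unfold ones; ring).
  apply linf_norm_ge, linf_bounded_sub; auto using linf_bounded_iterT, linf_bounded_ones.
Qed.

End ReturnTimes.

Lemma recurrent_has_return_times (lam : seqC) :
  recurrent (T_diag lam) -> has_return_times lam.
Proof.
  intros Hrec e He.
  set (eta := Rmin e 1 / 4).
  assert (Heta : 0 < eta /\ eta <= e / 4 /\ eta <= 1 / 4).
  { unfold eta. pose proof (Rmin_l e 1). pose proof (Rmin_r e 1).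
    assert (0 < Rmin e 1) by (apply Rmin_glb_lt; lra). lra. }
  destruct (Hrec _ (linf_ball_open ones eta linf_bounded_ones))
    as (k & Hk & y & [Hy Hy1] & [Hky Hky1]).
  { exists ones. split; [exact linf_bounded_ones|].
    rewrite linf_norm_zero; [lra|]. intro. unfold seq_sub, ones. ring. }
  exists k. split; [exact Hk|]. intro j.
  assert (Hyj : Cmod (y j - 1)%C < eta).
  { eapply Rle_lt_trans; [|exact Hy1].
    apply (linf_norm_ge (seq_sub y ones)), linf_bounded_sub; auto using linf_bounded_ones. }
  assert (Hkyj : Cmod (lam j ^ k * y j - 1)%C < eta).
  { rewrite <- iterT_T_diag. eapply Rle_lt_trans; [|exact Hky1].
    apply (linf_norm_ge (seq_sub _ ones)), linf_bounded_sub; auto using linf_bounded_ones. }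
  (* [y_j] and [lam_j^k y_j] are both [eta]-close to [1], and [|y_j| >= 3/4]. *)
  assert (Hmove : Cmod (lam j ^ k - 1)%C * Cmod (y j) <= 2 * eta).
  { rewrite <- Cmod_mult.
    replace ((lam j ^ k - 1) * y j)%C with ((lam j ^ k * y j - 1) - (y j - 1))%C by ring.
    pose proof (Cmod_minus_le (lam j ^ k * y j - 1) (y j - 1)). lra. }
  assert (Hy34 : 3 / 4 <= Cmod (y j)).
  { pose proof (Cmod_minus_ge 1 (y j)) as H. rewrite Cmod_1, Cmod_minus_sym in H. lra. }
  pose proof (Cmod_ge_0 (lam j ^ k - 1)%C). nra.
Qed.

Lemma has_return_times_uniformly_rigid (lam : seqC) : linf_bounded lam ->
  has_return_times lam -> uniformly_rigid (T_diag lam).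
Proof.
  intros Hlam Hret. destruct (return_time_sequence lam Hret) as (kn & Hinc & Hkn).
  exists kn. split; [exact Hinc|].
  apply is_lim_seq_le_le with (fun _ => 0) (fun n => / (INR n + 1));
    [|apply is_lim_seq_const|apply is_lim_seq_inv_succ].
  intro n. assert (Hbound : forall y, linf_bounded y -> linf_norm y <= 1 ->
    linf_norm (seq_sub (iterT (T_diag lam) (kn n) y) y) <= / (INR n + 1)).
  { intros y Hy Hy1. eapply Rle_trans; [now apply linf_norm_iterT_sub_le|].
    pose proof (pos_INR n). rewrite <- (Rmult_1_r (/ (INR n + 1))) at 2.
    apply Rmult_le_compat_l; [left; apply Rinv_0_lt_compat; lra|exact Hy1]. }
  pose proof (op_norm_bounds _ _ ones Hbound linf_bounded_ones linf_norm_ones_le) as [Hge Hle].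
  split; [|exact Hle]. eapply Rle_trans; [|exact Hge].
  apply linf_norm_ge0, linf_bounded_sub; auto using linf_bounded_iterT, linf_bounded_ones.
Qed.

Lemma has_return_times_rigid (lam : seqC) : linf_bounded lam ->
  has_return_times lam -> rigid (T_diag lam).
Proof.
  intros Hlam Hret. destruct (return_time_sequence lam Hret) as (kn & Hinc & Hkn).
  exists kn. split; [exact Hinc|]. intros x Hx.
  apply is_lim_seq_le_le with (fun _ => 0) (fun n => / (INR n + 1) * linf_norm x);
    [|apply is_lim_seq_const|].
  - intro n. split.
    + apply linf_norm_ge0, linf_bounded_sub; auto using linf_bounded_iterT.
    + now apply linf_norm_iterT_sub_le.
  - replace (Finite 0) with (Rbar_mult 0 (linf_norm x)) by (simpl; f_equal; ring).
    apply is_lim_seq_scal_r, is_lim_seq_inv_succ.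
Qed.

Lemma rigid_recurrent (lam : seqC) : linf_bounded lam ->
  rigid (T_diag lam) -> recurrent (T_diag lam).
Proof.
  intros Hlam (kn & Hinc & Hrig) U [HUb HUopen] [x Hx].
  destruct (HUopen x Hx) as (eps & Heps & Hball).
  assert (Hxb : linf_bounded x) by now apply HUb.
  specialize (Hrig x Hxb). apply is_lim_seq_spec in Hrig.
  destruct (Hrig (mkposreal eps Heps)) as [N HN].
  specialize (HN N (le_n N)). simpl in HN. rewrite Rminus_0_r in HN.
  exists (kn N). split; [pose proof (increasing_pos_ge kn Hinc N); lia|].
  exists x. split; [exact Hx|].
  apply Hball; [now apply linf_bounded_iterT|].
  now apply Rabs_def2 in HN as [HN _].
Qed.

Lemma uniformly_rigid_has_return_times (lam : seqC) : linf_bounded lam ->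
  uniformly_rigid (T_diag lam) -> has_return_times lam.
Proof.
  intros Hlam (kn & Hinc & Hlim) e He. apply is_lim_seq_spec in Hlim.
  destruct (Hlim (mkposreal e He)) as [N HN].
  specialize (HN N (le_n N)). simpl in HN. rewrite Rminus_0_r in HN.
  apply Rabs_def2 in HN as [HN _].
  exists (kn N). split; [pose proof (increasing_pos_ge kn Hinc N); lia|].
  intro j. pose proof (return_time_le_op_norm lam Hlam (kn N) j). lra.
Qed.

Definition rotation_condition (lam : seqC) : Prop :=
  exists theta : nat -> R,
    (forall k, lam k = cis (2 * PI * theta k)) /\
    LimInf_seq (fun n => real (Sup_seq (fun k =>
      Finite (Cmod (Cminus (cis (2 * PI * INR n * theta k)) (RtoC 1)))))) = Finite 0.

Lemma linf_bounded_cis_sub1 (f : nat -> R) : linf_bounded (fun k => (cis (f k) - 1)%C).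
Proof.
  exists 2. intro k. eapply Rle_trans; [apply Cmod_minus_le|].
  rewrite Cmod_cis, Cmod_1. lra.
Qed.

Lemma rotation_condition_has_return_times (lam : seqC) :
  rotation_condition lam -> has_return_times lam.
Proof.
  intros (theta & Hth & Hliminf) e He.
  set (u n := linf_norm (fun k => (cis (2 * PI * INR n * theta k) - 1)%C)).
  change (LimInf_seq u = 0) in Hliminf.
  destruct (ex_LimInf_seq u) as [l Hl].
  assert (l = 0) as -> by (apply is_LimInf_seq_unique in Hl; congruence).
  destruct (Hl (mkposreal e He)) as [Hoften _].
  destruct (Hoften 1%nat) as (n & Hn & Hun). simpl in Hun.
  exists n. split; [lia|]. intro j.
  rewrite Hth, <- cis_INR_mult.
  replace (INR n * (2 * PI * theta j)) with (2 * PI * INR n * theta j) by ring.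
  pose proof (linf_norm_ge _ j (linf_bounded_cis_sub1 (fun k => 2 * PI * INR n * theta k))).
  unfold u in Hun. lra.
Qed.

Lemma has_return_times_rotation_condition (lam : seqC) :
  has_return_times lam -> rotation_condition lam.
Proof.
  intros Hret.
  assert (Harg : forall j, {t | lam j = cis t}).
  { intro j. apply constructive_indefinite_description, cis_of_Cmod_1.
    now apply has_return_times_Cmod. }
  set (theta j := proj1_sig (Harg j) / (2 * PI)).
  assert (Hcis : forall n j, cis (2 * PI * INR n * theta j) = (lam j ^ n)%C).
  { intros n j. unfold theta. destruct (Harg j) as [t ->]. simpl.
    rewrite <- cis_INR_mult. f_equal. pose proof PI_RGT_0. field. lra. }
  exists theta. split.
  { intro k. rewrite <- (Cpow_1_r (lam k)), <- Hcis. f_equal. simpl. ring. }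
  apply is_LimInf_seq_unique. intro eps. pose proof (cond_pos eps). split.
  - intro N. destruct (has_return_times_unbounded lam Hret (eps / 2)) with N as [k [Hk Hret_k]];
      [lra|].
    exists k. split; [lia|].
    assert (linf_norm (fun j => (cis (2 * PI * INR k * theta j) - 1)%C) <= eps / 2).
    { apply linf_norm_le. intro j. rewrite Hcis. apply Hret_k. }
    unfold linf_norm in *. lra.
  - exists O. intros n _.
    pose proof (linf_norm_ge0 _ (linf_bounded_cis_sub1 (fun j => 2 * PI * INR n * theta j))).
    unfold linf_norm in *. lra.
Qed.

Theorem theorem5p3 (lam : nat -> C) (hlam : linf_bounded lam) :
  (recurrent (T_diag lam) <-> rigid (T_diag lam)) /\
  (rigid (T_diag lam) <-> uniformly_rigid (T_diag lam)) /\
  (uniformly_rigid (T_diag lam) <->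
     exists theta : nat -> R,
       (forall k, lam k = cis (2 * PI * theta k)) /\
       LimInf_seq (fun n => real (Sup_seq (fun k =>
           Finite (Cmod (Cminus (cis (2 * PI * INR n * theta k)) (RtoC 1)))))) = Finite 0).
Proof.
  fold (rotation_condition lam).
  pose proof (recurrent_has_return_times lam).
  pose proof (has_return_times_rigid lam hlam).
  pose proof (rigid_recurrent lam hlam).
  pose proof (has_return_times_uniformly_rigid lam hlam).
  pose proof (uniformly_rigid_has_return_times lam hlam).
  pose proof (rotation_condition_has_return_times lam).
  pose proof (has_return_times_rotation_condition lam).
  tauto.
Qed.
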